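(* Let $\Gamma^*$ be a closed subgroup of $Sym(\mathbb Q\times\mathbb Z)$ such that the group of shifts is contained in $\Gamma^*$ and $\Gamma^*\subseteq\Gamma({A_1}_1)$. If $\Gamma^*$ initiates the full group $Sym(\mathbb Q)$, then $\Gamma^*=\Gamma(+1)$ or $\Gamma^*=\Gamma({A_1}_1)$.
   Context: $\mathbb Q\times\mathbb Z$ denotes the set $\mathbb Q\times\mathbb Z$ with the lexicographic order. $Sym(X)$ is the group of all permutations of $X$ with the topology of pointwise convergence. A vertical is a set $\{r\}\times\mathbb Z$. A permutation $g$ is systemic if it maps every vertical onto a vertical; it initiates the permutation $h$ of $\mathbb Q$ with $g(\{a\}\times\mathbb Z)=\{h(a)\}\times\mathbb Z$; a group of systemic permutations initiates the set of permutations initiated by its elements. A systemic permutation is positive if it preserves the order on each vertical and negative if it reverses the order on each vertical. A shift is a positive permutation initiating an increasing map of $\mathbb Q$. $\Gamma(+1)$ is the group of all positive permutations (the automorphism group of the successor relation) and $\Gamma({A_1}_1)$ is the group of all positive or negative permutations (the automorphism group of the 1-codirection relation ${A_1}_1(x,y,z,t)\iff x-y=z-t\wedge|x-y|=1$). *)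

From HB Require Import structures.
From mathcomp Require Import all_boot all_order all_algebra.
Set Implicit Arguments. Unset Strict Implicit. Unset Printing Implicit Defensive.
Import Order.TTheory GRing.Theory Num.Theory.
Local Open Scope ring_scope.

(* The underlying set Q x Z (lexicographic order is not needed below). *)
Definition QZ : Type := (rat * int)%type.

Definition is_perm (T : Type) (f : T -> T) : Prop := bijective f.

Definition is_subgroup (T : Type) (G : (T -> T) -> Prop) : Prop :=
  [/\ (forall f, G f -> is_perm f),
      G id,
      (forall f g, G f -> G g -> G (f \o g)) &
      (forall f g, G f -> cancel f g -> cancel g f -> G g)].

(* G is closed in Sym(T) for the topology of pointwise convergence:
   every permutation all of whose finite restrictions are matched by
   elements of G belongs to G. *)
Definition is_closed_perm_set (T : eqType) (G : (T -> T) -> Prop) : Prop :=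
  forall h : T -> T, is_perm h ->
    (forall F : seq T, exists g, G g /\ (forall x, x \in F -> g x = h x)) ->
    G h.

Definition systemic (g : QZ -> QZ) : Prop :=
  forall a : rat, exists b : rat,
    (forall z : int, (g (a, z)).1 = b) /\
    (forall z' : int, exists z : int, g (a, z) = (b, z')).

Definition initiates (g : QZ -> QZ) (h : rat -> rat) : Prop :=
  systemic g /\ forall (a : rat) (z : int), (g (a, z)).1 = h a.

Definition positive_perm (g : QZ -> QZ) : Prop :=
  systemic g /\ forall (a : rat) (z1 z2 : int), z1 < z2 -> (g (a, z1)).2 < (g (a, z2)).2.

Definition negative_perm (g : QZ -> QZ) : Prop :=
  systemic g /\ forall (a : rat) (z1 z2 : int), z1 < z2 -> (g (a, z2)).2 < (g (a, z1)).2.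

Definition shift (g : QZ -> QZ) : Prop :=
  is_perm g /\ positive_perm g /\
  exists h : rat -> rat, initiates g h /\ (forall a b : rat, a < b -> h a < h b).

Definition Gamma_plus1 (g : QZ -> QZ) : Prop := is_perm g /\ positive_perm g.

Definition Gamma_A11 (g : QZ -> QZ) : Prop :=
  is_perm g /\ (positive_perm g \/ negative_perm g).

From mathcomp Require Import all_boot all_order all_algebra.
From mathcomp Require Import zify lra.
From Stdlib Require Import Classical.
Set Implicit Arguments. Unset Strict Implicit. Unset Printing Implicit Defensive.
Import Order.TTheory GRing.Theory Num.Theory.
Local Open Scope ring_scope.

(* A positive (negative) permutation of Q x Z is determined by the permutation
   h of Q it initiates and an integer translation c a of each vertical:
   (a, z) |-> (h a, z + c a) (resp. (h a, c a - z)).  Vertical translations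
   are shifts, so once Gs contains one such lift of h it contains all of
   them.  The square of any positive or negative permutation is positive, and
   every permutation of Q agrees on a given finite set with the square of a
   permutation; as Gs initiates all of Sym(Q) and is closed, it contains every
   positive permutation.  If Gs also contains a negative permutation n, then
   every negative permutation is a positive one composed with n. *)

Lemma homo_lt_surj_int_addr (f : int -> int) :
  {homo f : x y / x < y} -> (forall y, exists x, f x = y) ->
  forall z, f z = f 0 + z.
Proof.
move=> f_lt f_surj.
have fS z : f (z + 1) = f z + 1.
  have [w fw] := f_surj (f z + 1).
  have [w_lt|w_gt|<-] := ltgtP w (z + 1) => //.
  - have fw_le : f w <= f z by rewrite (ltW_homo f_lt) //; lia.
    lia.
  - have := f_lt _ _ w_gt; have := f_lt z (z + 1) ltac:(lia); lia.
elim/int_rec=> [|n IHn|n IHn]; first by rewrite addr0.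
- by rewrite -addn1 PoszD addrA fS IHn.
- move: (fS (- n.+1%:Z)); rewrite (_ : - n.+1%:Z + 1 = - n%:Z); lia.
Qed.

Lemma homo_gt_surj_int_subr (f : int -> int) :
  (forall x y, x < y -> f y < f x) -> (forall y, exists x, f x = y) ->
  forall z, f z = f 0 - z.
Proof.
move=> f_gt f_surj z.
have := @homo_lt_surj_int_addr (fun x => f (- x)) _ _ (- z).
rewrite opprK oppr0; apply=> [x y|y]; first by rewrite -ltrN2; apply: f_gt.
by have [x fx] := f_surj y; exists (- x); rewrite opprK.
Qed.

Definition pos_lift (h : rat -> rat) (c : rat -> int) : QZ -> QZ :=
  fun x => (h x.1, x.2 + c x.1).

Definition neg_lift (h : rat -> rat) (c : rat -> int) : QZ -> QZ :=
  fun x => (h x.1, c x.1 - x.2).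

Definition base (g : QZ -> QZ) (a : rat) : rat := (g (a, 0)).1.

Lemma systemic_base g : systemic g -> initiates g (base g).
Proof.
move=> g_sys; split=> // a z; have [b [gb _]] := g_sys a.
by rewrite /base !gb.
Qed.

Lemma initiates_base g h : initiates g h -> base g =1 h.
Proof. by case=> _ gh a; rewrite /base gh. Qed.

Lemma initiates_bij g h : bijective g -> initiates g h -> bijective h.
Proof.
case=> gi gK giK [g_sys gh].
exists (fun b => (gi (b, 0)).1) => [a|b].
  have [b [_ /(_ 0) [z gz]]] := g_sys a.
  have -> : h a = b by rewrite -(gh a z) gz.
  by rewrite -gz gK.
by rewrite -(gh _ (gi (b, 0)).2) -surjective_pairing giK.
Qed.

Lemma positive_liftE g :
  positive_perm g -> g =1 pos_lift (base g) (fun a => (g (a, 0)).2).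
Proof.
case=> g_sys g_lt [a z]; have [b [gb g_onto]] := g_sys a.
have g2 : forall z, (g (a, z)).2 = (g (a, 0)).2 + z.
  apply: homo_lt_surj_int_addr (g_lt a) _ => y.
  by have [w gw] := g_onto y; exists w; rewrite gw.
by rewrite /pos_lift /base /= addrC -g2 [in RHS]gb -(gb z) -surjective_pairing.
Qed.

Lemma negative_liftE g :
  negative_perm g -> g =1 neg_lift (base g) (fun a => (g (a, 0)).2).
Proof.
case=> g_sys g_gt [a z]; have [b [gb g_onto]] := g_sys a.
have g2 : forall z, (g (a, z)).2 = (g (a, 0)).2 - z.
  apply: homo_gt_surj_int_subr (g_gt a) _ => y.
  by have [w gw] := g_onto y; exists w; rewrite gw.
by rewrite /neg_lift /base /= -g2 [in RHS]gb -(gb z) -surjective_pairing.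
Qed.

Lemma pos_lift_bij h c : bijective h -> bijective (pos_lift h c).
Proof.
case=> hi hK hiK; exists (pos_lift hi (fun b => - c (hi b))) => -[a z].
- by rewrite /pos_lift /= hK addrK.
- by rewrite /pos_lift /= hiK subrK.
Qed.

Lemma pos_lift_positive h c : positive_perm (pos_lift h c).
Proof.
split=> [a|a z1 z2]; last by rewrite /pos_lift /= ltrD2r.
by exists (h a); split=> // z'; exists (z' - c a); rewrite /pos_lift /= subrK.
Qed.

Lemma pos_lift_shift h c :
  bijective h -> {homo h : a b / a < b} -> shift (pos_lift h c).
Proof.
move=> h_bij h_lt; split; first exact: pos_lift_bij.
split; first exact: pos_lift_positive.
by exists h; split=> //; split=> //; case: (pos_lift_positive h c).
Qed.

Lemma pos_lift_comp h k c d :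
  pos_lift h c \o pos_lift k d =1 pos_lift (h \o k) (fun a => d a + c (k a)).
Proof. by move=> [a z]; rewrite /pos_lift /= addrA. Qed.

Lemma neg_lift_comp h k c d :
  neg_lift h c \o neg_lift k d =1 pos_lift (h \o k) (fun a => c (k a) - d a).
Proof. by move=> [a z]; rewrite /pos_lift /neg_lift /=; congr pair; lia. Qed.

Section SwapOn.

Variables (T : Type) (f fi : T -> T) (B : pred T).
Hypotheses (fK : cancel f fi) (fiK : cancel fi f).
Hypothesis B_disj : forall x, B x -> ~~ B (f x).

Definition swap_on (x : T) : T :=
  if B x then f x else if B (fi x) then fi x else x.

Lemma swap_onK : involutive swap_on.
Proof.
move=> x; rewrite /swap_on.
have [Bx|nBx] := boolP (B x); first by rewrite (negbTE (B_disj Bx)) fK Bx.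
by case Bfix: (B (fi x)); rewrite ?Bfix ?fiK ?(negbTE nBx).
Qed.

End SwapOn.

Lemma norm_le_sum_norm (R : numDomainType) (s : seq R) x :
  x \in s -> `|x| <= \sum_(y <- s) `|y|.
Proof.
elim: s => //= y s IHs; rewrite inE big_cons => /orP[/eqP->|/IHs x_le].
- by rewrite lerDl sumr_ge0.
- by rewrite (le_trans x_le) // lerDr.
Qed.

(* [u] sends [a] to [a + K] and then [a + K] to [h a]; it is a translation
   followed by the involution exchanging [a + 2K] and [h a], for [K] so large
   that [A], [A + K], [A + 2K] and [h @: A] do not interfere. *)
Lemma square_root_on (R : realDomainType) (h : R -> R) (A : seq R) :
  bijective h -> exists2 u : R -> R, bijective u & {in A, forall a, u (u a) = h a}.
Proof.
case=> hi hK hiK; pose M : R := \sum_(y <- A ++ map h A) `|y|.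
have A_bnd a : a \in A -> - M <= a /\ a <= M.
  by move=> aA; apply/andP; rewrite -ler_norml norm_le_sum_norm // mem_cat aA.
have hA_bnd a : a \in A -> - M <= h a /\ h a <= M.
  by move=> aA; apply/andP; rewrite -ler_norml norm_le_sum_norm // mem_cat map_f ?orbT.
pose K : R := M *+ 2 + 1.
pose f x := h (x - K *+ 2); pose fi y := hi y + K *+ 2.
pose B := [pred x | x - K *+ 2 \in A].
have fK : cancel f fi by move=> x; rewrite /f /fi hK subrK.
have fiK : cancel fi f by move=> y; rewrite /f /fi addrK hiK.
have B_disj x : B x -> ~~ B (f x).
  rewrite !inE /f => xA; apply/negP => /A_bnd; move: (hA_bnd _ xA).
  rewrite /K; lra.
exists (swap_on f fi B \o +%R^~ K).
  apply: bij_comp; first exact/inv_bij/swap_onK.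
  by exists (+%R^~ (- K)) => x; rewrite /= ?addrK ?subrK.
move=> a aA; have [aL aU] := A_bnd a aA.
have ua : swap_on f fi B (a + K) = a + K.
  have aKB : (a + K - K *+ 2 \in A) = false.
    by apply/negP => /A_bnd; rewrite /K; lra.
  have aKhA : (hi (a + K) \in A) = false.
    by apply/negP => /hA_bnd; rewrite hiK /K; lra.
  by rewrite /swap_on !inE /fi addrK aKB aKhA.
by rewrite /= ua /swap_on !inE /f (_ : a + K + K - K *+ 2 = a) ?aA //; lra.
Qed.

Section ClosedGroup.

Variable Gs : (QZ -> QZ) -> Prop.
Hypothesis Gs_subgroup : is_subgroup Gs.
Hypothesis Gs_closed : is_closed_perm_set Gs.
Hypothesis Gs_shifts : forall g, shift g -> Gs g.
Hypothesis Gs_A11 : forall g, Gs g -> Gamma_A11 g.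
Hypothesis Gs_initiates_Sym : forall h, is_perm h -> exists g, Gs g /\ initiates g h.

Lemma Gs_eq f g : Gs f -> f =1 g -> Gs g.
Proof.
case: Gs_subgroup => Gs_perm _ _ _ Gf fg; apply: Gs_closed.
  exact: eq_bij (Gs_perm f Gf) _ fg.
by move=> F; exists f; split=> // x _; apply: fg.
Qed.

Lemma Gs_comp f g : Gs f -> Gs g -> Gs (f \o g).
Proof. by case: Gs_subgroup => _ _ + _; apply. Qed.

Lemma Gs_pos_lift_id c : Gs (pos_lift id c).
Proof. by apply/Gs_shifts/pos_lift_shift; first exists id. Qed.

Lemma Gs_pos_lift_change h c c' : Gs (pos_lift h c) -> Gs (pos_lift h c').
Proof.
move=> Gh; apply: Gs_eq (Gs_comp Gh (Gs_pos_lift_id (fun a => c' a - c a))) _.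
by move=> x; rewrite pos_lift_comp /pos_lift /= subrK.
Qed.

Lemma Gs_square g : Gs g -> exists c, Gs (pos_lift (base g \o base g) c).
Proof.
move=> Gg; have Ggg := Gs_comp Gg Gg.
have [_ [g_pos|g_neg]] := Gs_A11 Gg.
- eexists; apply: Gs_eq Ggg _ => x; have gE := positive_liftE g_pos.
  by rewrite /= gE (gE x); apply: pos_lift_comp.
- eexists; apply: Gs_eq Ggg _ => x; have gE := negative_liftE g_neg.
  by rewrite /= gE (gE x); apply: neg_lift_comp.
Qed.

Lemma Gs_pos_lift h c : bijective h -> Gs (pos_lift h c).
Proof.
move=> h_bij; apply: (@Gs_pos_lift_change _ (fun _ => 0)).
apply: Gs_closed; first exact: pos_lift_bij.
move=> F; have [u u_bij uuh] := square_root_on (map fst F) h_bij.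
have [g [Gg g_u]] := Gs_initiates_Sym u_bij; have [c2 Gc2] := Gs_square Gg.
exists (pos_lift (base g \o base g) (fun _ => 0)); split; first exact: Gs_pos_lift_change Gc2.
by move=> [a z] aF; rewrite /pos_lift /= !(initiates_base g_u) uuh // (map_f fst aF).
Qed.

Lemma Gamma_plus1_sub g : Gamma_plus1 g -> Gs g.
Proof.
case=> g_bij g_pos; apply: Gs_eq (Gs_pos_lift _ _) (fsym (positive_liftE g_pos)).
by apply: initiates_bij g_bij _; apply/systemic_base; case: g_pos.
Qed.

Lemma Gs_negative_sub n g : Gs n -> negative_perm n -> Gamma_A11 g -> Gs g.
Proof.
move=> Gn n_neg [g_bij [g_pos|g_neg]]; first exact: Gamma_plus1_sub.
have [n_sys _] := n_neg; have [g_sys _] := g_neg.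
have [ni nK niK] := initiates_bij (Gs_A11 Gn).1 (systemic_base n_sys).
have h_bij : bijective (base g \o ni).
  apply: bij_comp; first exact: initiates_bij g_bij (systemic_base g_sys).
  by exists (base n).
pose d b := (g (ni b, 0)).2 - (n (ni b, 0)).2.
apply: Gs_eq (Gs_comp (Gs_pos_lift d h_bij) Gn) _ => x.
rewrite /= (negative_liftE n_neg) (negative_liftE g_neg) /pos_lift /neg_lift /d /= nK.
by congr pair; lia.
Qed.

End ClosedGroup.

Theorem mainTheorem9 (Gs : (QZ -> QZ) -> Prop) :
  is_subgroup Gs ->
  is_closed_perm_set Gs ->
  (forall g, shift g -> Gs g) ->
  (forall g, Gs g -> Gamma_A11 g) ->
  (forall h : rat -> rat, is_perm h -> exists g, Gs g /\ initiates g h) ->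
  (forall g, Gs g <-> Gamma_plus1 g) \/ (forall g, Gs g <-> Gamma_A11 g).
Proof.
move=> Gs_subgroup Gs_closed Gs_shifts Gs_A11 Gs_initiates_Sym.
have Gamma_plus1_Gs := Gamma_plus1_sub Gs_subgroup Gs_closed Gs_shifts Gs_A11 Gs_initiates_Sym.
have [[n [Gn n_neg]]|no_neg] := classic (exists n, Gs n /\ negative_perm n).
- right=> g; split; first exact: Gs_A11.
  exact: Gs_negative_sub Gs_subgroup Gs_closed Gs_shifts Gs_A11 Gs_initiates_Sym n g Gn n_neg.
- left=> g; split; last exact: Gamma_plus1_Gs.
  move=> Gg; have [g_bij [g_pos|g_neg]] := Gs_A11 g Gg; first by split.
  by case: no_neg; exists g.
Qed.
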